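(* Let $k\ge 2$ and let $\mathcal H$ be a 3-uniform hypergraph on vertex set $V$ with no Berge cycle of length $2k+1$. Let $V=V_1\cup V_2$ be a partition. Let $\mathcal H_4$ be a set of hyperedges of $\mathcal H$ such that each $E\in\mathcal H_4$ has the form $E=\{u,v,w\}$ where, for some $i\in\{1,2\}$, $u,v\in V_i$, $w\in V_{3-i}$, the pair $\{u,v\}$ is contained in no hyperedge of $\mathcal H$ other than $E$, and $\max(\deg_{\mathcal H}(w,u),\deg_{\mathcal H}(w,v))\ge 3$. Let $G_4$ be the graph with edge set $\{E\cap V_i : E\in\mathcal H_4\}$ (i.e. the pairs $\{u,v\}$ above). Then $G_4$ contains no cycle of length $2k$; consequently $|\mathcal H_4|\le \mathrm{ex}(n,C_{2k})$ where $n=|V|$.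
   Context: $\deg_{\mathcal H}(u,v)$ is the number of hyperedges of $\mathcal H$ containing both $u$ and $v$. A Berge cycle of length $m$ is a family of $m$ distinct hyperedges $H_0,\dots,H_{m-1}$ for which there exist distinct vertices $v_0,\dots,v_{m-1}$ with $\{v_i,v_{i+1}\}\subset H_i$ (indices mod $m$). $\mathrm{ex}(n,C_{2k})$ is the maximum number of edges of a simple graph on $n$ vertices with no cycle of length $2k$. *)

From mathcomp Require Import all_boot.
Set Implicit Arguments. Unset Strict Implicit. Unset Printing Implicit Defensive.

Definition uniform (T : finType) (r : nat) (H : {set {set T}}) : bool :=
  [forall E in H, #|E| == r].

Definition codeg (T : finType) (H : {set {set T}}) (u v : T) : nat :=
  #|[set E in H | (u \in E) && (v \in E)]|.

Definition berge_cycle (T : finType) (H : {set {set T}}) (m : nat) : Prop :=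
  exists (v : 'I_m -> T) (F : 'I_m -> {set T}),
    [/\ injective v, injective F &
        forall i : 'I_m, [/\ F i \in H, v i \in F i & v (ordS i) \in F i]].

Definition simple_graph (T : finType) (G : {set {set T}}) : bool :=
  [forall e in G, #|e| == 2].

Definition has_cycle (T : finType) (G : {set {set T}}) (m : nat) : bool :=
  [exists v : {ffun 'I_m -> T},
     injectiveb v && [forall i : 'I_m, [set v i; v (ordS i)] \in G]].

Definition ex (n m : nat) : nat :=
  \max_(G : {set {set 'I_n}} | simple_graph G && ~~ has_cycle G m) #|G|.

(* A 2k-cycle v_0 ... v_{2k-1} of G4 lies on one side S of the partition, and
   its edges are the traces E_i :&: S of distinct hyperedges E_i of H4, whose
   third vertices w_i lie off S.  Orient the cycle so that w_0 has codegree at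
   least 3 with v_0.  Then some hyperedge F contains w_0 and v_0 and differs from
   E_0 and E_{2k-1}; it differs from every other E_i as well, since v_0 is not
   in their trace.  Inserting w_0 between v_0 and v_1, with hyperedges F and E_0
   on either side, gives a Berge cycle of length 2k+1.  The bound on |H4| holds
   because E |-> (its trace pair) is injective on H4: the pair lies in no other
   hyperedge. *)

From mathcomp Require Import all_boot all_algebra.
Set Implicit Arguments. Unset Strict Implicit. Unset Printing Implicit Defensive.
Import GRing.Theory.

Lemma ordS_addr1 n (i : 'I_n.+2) : ordS i = (i + 1)%R.
Proof. exact/esym/(add_Zp_1 (p := n.+2)). Qed.

Lemma ordS_max n : ordS (@ord_max n) = ord0.
Proof. by apply: val_inj; rewrite /= modnn. Qed.

Lemma ordS_lift_max n (j : 'I_n.+1) :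
  ordS (lift ord_max j) = if j == ord_max then ord_max else lift ord_max (ordS j).
Proof.
have lt_j := ltn_ord j; apply: val_inj; rewrite /= /bump leqNgt lt_j /=.
case: (eqVneq j ord_max) => [-> /=|ne /=]; first by rewrite modn_small.
have lt_jS : j.+1 < n.+1.
  by rewrite ltn_neqAle lt_j andbT; apply: contraNneq ne => -[e]; apply/eqP/val_inj.
rewrite (modn_small lt_jS) modn_small; last exact: ltn_trans lt_jS _.
by rewrite /bump leqNgt lt_jS.
Qed.

Lemma Zp_invariant X n (f : 'I_n.+2 -> X) :
  (forall i, f (i + 1)%R = f i) -> forall i, f i = f 0%R.
Proof.
move=> step i; rewrite -(natr_Zp i); elim: (nat_of_ord i) => // k IH.
by rewrite mulrSr step IH.
Qed.

Lemma addr11_neq n (i : 'I_n.+3) : (i + 1 + 1)%R != i.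
Proof. by rewrite -addrA -subr_eq0 addrAC subrr add0r. Qed.

Lemma setI_triple_pair (T : finType) (S : {set T}) u v w :
  u \in S -> v \in S -> w \notin S -> [set u; v; w] :&: S = [set u; v].
Proof.
move=> uS vS wS; apply/setP => x; rewrite !inE.
have [xS|xS] := boolP (x \in S); rewrite ?andbT ?andbF.
  have /negbTE -> : x != w by apply: contraNneq wS => <-.
  by rewrite orbF.
by apply/esym/negbTE; apply: contra xS => /orP [] /eqP ->.
Qed.

Lemma setI_triple_single (T : finType) (S : {set T}) u v w :
  u \notin S -> v \notin S -> w \in S -> [set u; v; w] :&: S = [set w].
Proof.
move=> uS vS wS; apply/setP => x; rewrite !inE.
have [xS|xS] := boolP (x \in S); rewrite ?andbT ?andbF.
  have /negbTE -> : x != u by apply: contraNneq uS => <-.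
  by have /negbTE -> : x != v by apply: contraNneq vS => <-.
by apply/esym/negbTE; apply: contra xS => /eqP ->.
Qed.

Lemma setC_of_partition (T : finType) (A B : {set T}) :
  A :&: B = set0 -> A :|: B = setT -> B = ~: A.
Proof.
move=> /setP AB /setP AUB; apply/setP => x; move: (AB x) (AUB x); rewrite !inE.
by case: (x \in A); case: (x \in B).
Qed.

Section BergeCycles.
Variables (T : finType) (H : {set {set T}}).

Lemma codeg_avoid2 x y (A B : {set T}) : 2 < codeg H x y ->
  exists2 F, F \in H & [/\ x \in F, y \in F, F != A & F != B].
Proof.
rewrite /codeg; set S := [set F in H | _] => lt2S.
have : S :\ A :\ B != set0.
  apply: contraTneq lt2S => S0; rewrite -leqNgt (cardsD1 A) (cardsD1 B (S :\ A)) S0 cards0.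
  by case: (A \in S); case: (B \in S :\ A).
by case/set0Pn => F; rewrite !inE => /and5P [FB FA FH xF yF]; exists F.
Qed.

Lemma berge_cycle_insert n (v : 'I_n.+1 -> T) (E : 'I_n.+1 -> {set T}) w F :
  injective v -> injective E ->
  (forall i, [/\ E i \in H, v i \in E i & v (ordS i) \in E i]) ->
  (forall i, w != v i) -> (forall i, F != E i) ->
  w \in E ord_max -> F \in H -> w \in F -> v ord0 \in F -> berge_cycle H n.+2.
Proof.
move=> vinj Einj vE wv FE wE FH wF vF.
exists (fun i => if unlift ord_max i is Some j then v j else w).
exists (fun i => if unlift ord_max i is Some j then E j else F).
split.
- move=> i j; case: unliftP => [i'|] ->; case: unliftP => [j'|] -> //.
  + by move/vinj ->.
  + by move=> e; move: (wv i'); rewrite e eqxx.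
  + by move=> e; move: (wv j'); rewrite e eqxx.
- move=> i j; case: unliftP => [i'|] ->; case: unliftP => [j'|] -> //.
  + by move/Einj ->.
  + by move=> e; move: (FE i'); rewrite e eqxx.
  + by move=> e; move: (FE j'); rewrite e eqxx.
- move=> i; case: unliftP => [j|] ->.
  + have [EH vjE vSjE] := vE j; rewrite ordS_lift_max.
    case: (eqVneq j ord_max) => [ej|_]; last by rewrite liftK; split.
    by rewrite unlift_none; split => //; rewrite ej.
  + rewrite ordS_max (_ : ord0 = lift ord_max (@ord0 n)) ?liftK; first by split.
    exact: val_inj.
Qed.

Lemma berge_cycle_of_crossing n (S : {set T}) (v : 'I_n.+3 -> T)
    (E : 'I_n.+3 -> {set T}) w :
  injective v -> (forall i, E i \in H) ->
  (forall i, E i :&: S = [set v i; v (i + 1)%R]) ->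
  w \notin S -> w \in E ord_max -> 2 < codeg H w (v 0%R) ->
  berge_cycle H n.+4.
Proof.
move=> vinj EH ES wS wE cod.
have vES i : v i \in E i :&: S /\ v (i + 1)%R \in E i :&: S.
  by rewrite ES set21 set22.
have vS i : v i \in S by have [/setIP []] := vES i.
have Einj : injective E.
  move=> i j eE; have [viE vSiE] := vES i; rewrite eE ES in viE vSiE.
  case/set2P: viE => /vinj // ij; case/set2P: vSiE => /vinj ij'.
    by move: (addr11_neq j); rewrite -ij ij' eqxx.
  exact: (addIr 1%R).
have [F FH [wF vF FEmax FE0]] := codeg_avoid2 (E ord_max) (E 0%R) cod.
apply: (berge_cycle_insert vinj Einj _ _ _ wE FH wF vF).
- move=> i; have [/setIP [viE _] /setIP [vSiE _]] := vES i.
  by rewrite ordS_addr1.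
- by move=> i; apply: contraNneq wS => ->.
- move=> j; apply/eqP => FEj.
  have : v 0%R \in E j :&: S by rewrite -FEj inE vF vS.
  rewrite ES => /set2P [/vinj j0|/vinj j1].
    by move: FE0; rewrite FEj j0 eqxx.
  have jmax : j = ord_max by apply: ordS_inj; rewrite ordS_max ordS_addr1 -j1.
  by move: FEmax; rewrite FEj jmax eqxx.
Qed.

End BergeCycles.

Section TraceGraph.
Variables (T : finType) (H : {set {set T}}) (V1 : {set T}) (H4 : {set {set T}}).

(* The side V2 of the partition is written ~: V1. *)
Definition private_pair_edge (E : {set T}) : Prop :=
  exists u v w : T,
    [/\ E = [set u; v; w],
        (u \in V1) && (v \in V1) && (w \in ~: V1)
          || (u \in ~: V1) && (v \in ~: V1) && (w \in V1),
        (forall F, F \in H -> u \in F -> v \in F -> F = E) &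
        3 <= maxn (codeg H w u) (codeg H w v)].

Definition trace_graph : {set {set T}} :=
  [set e | [exists E in H4,
             ((e == E :&: V1) || (e == E :&: ~: V1)) && (#|e| == 2)]].

Lemma trace_graph_simple : simple_graph trace_graph.
Proof.
by apply/forallP => e; apply/implyP; rewrite inE => /existsP [E /and3P [_ _]].
Qed.

Lemma traces_triple u v w : (v \in V1) = (u \in V1) -> (w \in V1) = ~~ (u \in V1) ->
  ([set u; v; w] :&: V1, [set u; v; w] :&: ~: V1)
    = if u \in V1 then ([set u; v], [set w]) else ([set w], [set u; v]).
Proof.
move=> sv sw; case uV : (u \in V1); rewrite uV in sv sw.
  by rewrite setI_triple_pair ?setI_triple_single ?inE ?uV ?sv ?sw.
by rewrite setI_triple_single ?setI_triple_pair ?inE ?uV ?sv ?sw.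
Qed.

Lemma private_pair_edge_sides E : private_pair_edge E ->
  exists u v w, [/\ E = [set u; v; w], (v \in V1) = (u \in V1),
    (w \in V1) = ~~ (u \in V1),
    (forall F, F \in H -> u \in F -> v \in F -> F = E) &
    (2 < codeg H w u) || (2 < codeg H w v)].
Proof.
case=> u [v [w [defE side priv cod]]]; exists u, v, w; split => //; last by rewrite -leq_max.
all: by move: side; rewrite !inE; case: (u \in V1); case: (v \in V1); case: (w \in V1).
Qed.

Hypothesis H4_private : forall E, E \in H4 -> private_pair_edge E.

Lemma trace_graph_edge a b : [set a; b] \in trace_graph ->
  exists w, [/\ [set a; b; w] \in H4, (b \in V1) = (a \in V1),
    (w \in V1) = ~~ (a \in V1) & (2 < codeg H w a) || (2 < codeg H w b)].
Proof.
rewrite inE => /existsP [E /and3P [EH4 trE /eqP card_ab]].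
have [u [v [w [defE sv sw _ cod]]]] := private_pair_edge_sides (H4_private EH4).
have ab_uv : [set a; b] = [set u; v].
  move: trE card_ab; rewrite defE; have := traces_triple sv sw.
  by case: (u \in V1) => -[-> ->] /orP [] /eqP -> //; rewrite cards1.
have [aS bS] : a \in [set u; v] /\ b \in [set u; v] by rewrite -ab_uv set21 set22.
have [uS vS] : u \in [set a; b] /\ v \in [set a; b] by rewrite ab_uv set21 set22.
exists w; split.
- by rewrite -(_ : E = [set a; b; w]) // defE -ab_uv.
- by case/set2P: aS => ->; case/set2P: bS => ->; rewrite ?sv.
- by case/set2P: aS => ->; rewrite ?sv.
- by case/orP: cod; [case/set2P: uS | case/set2P: vS] => <- ->; rewrite ?orbT.
Qed.

Hypothesis H4_sub : H4 \subset H.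

Lemma trace_graph_no_cycle m : 2 < m -> ~ berge_cycle H m.+1 ->
  ~~ has_cycle trace_graph m.
Proof.
case: m => [|[|[|n]]] // _ noBerge.
apply/negP => /existsP [v /andP [/injectiveP vinj /forallP vedge]].
have /fin_all_exists [w hw] i := trace_graph_edge (vedge i).
pose E i := [set v i; v (ordS i); w i].
have EH i : E i \in H by have [EH4 _ _ _] := hw i; exact: (subsetP H4_sub).
have side i : (v i \in V1) = (v 0%R \in V1).
  apply: (Zp_invariant (f := fun i => v i \in V1)) => j.
  by rewrite -ordS_addr1; have [_ -> _ _] := hw j.
pose S := [set x | (x \in V1) == (v 0%R \in V1)].
have wS i : w i \notin S.
  by rewrite inE; have [_ _ -> _] := hw i; rewrite side; case: (_ \in V1).
have ES i : E i :&: S = [set v i; v (i + 1)%R].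
  by rewrite setI_triple_pair ?ordS_addr1 // inE -?ordS_addr1 side.
have wE0 : w 0%R \in E 0%R by rewrite !inE eqxx !orbT.
(* Reflect or rotate the cycle so that E ord_max = E 0 and the endpoint of
   codegree at least 3 with w 0 becomes the new v 0. *)
have [_ _ _] := hw 0%R; case/orP => cod.
- apply: noBerge; apply: (berge_cycle_of_crossing (v := fun i => v (- i)%R)
    (E := fun i => E (- i - 1)%R) _ _ _ (wS 0%R)).
  + by move=> i j /vinj /oppr_inj.
  + by [].
  + by move=> i; rewrite ES subrK opprD setUC.
  + by rewrite -opprD -(ordS_addr1 ord_max) ordS_max oppr0.
  + by rewrite oppr0.
- apply: noBerge; apply: (berge_cycle_of_crossing (v := fun i => v (i + 1)%R)
    (E := fun i => E (i + 1)%R) _ _ _ (wS 0%R)).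
  + by move=> i j /vinj /addIr.
  + by [].
  + by move=> i; rewrite ES.
  + by rewrite -ordS_addr1 ordS_max.
  + by rewrite -ordS_addr1.
Qed.

Lemma card_le_trace_graph : uniform 3 H -> #|H4| <= #|trace_graph|.
Proof.
move=> H3.
pose pair E := if #|E :&: V1| == 2 then E :&: V1 else E :&: ~: V1.
have pair_trace E : (pair E == E :&: V1) || (pair E == E :&: ~: V1).
  by rewrite /pair; case: ifP; rewrite eqxx ?orbT.
have pair_sub E : pair E \subset E by rewrite /pair; case: ifP => _; exact: subsetIl.
have pairP E : E \in H4 -> exists u v, [/\ pair E = [set u; v], u != v &
    forall F, F \in H -> u \in F -> v \in F -> F = E].
  move=> EH4; have [u [v [w [defE sv sw priv _]]]] := private_pair_edge_sides (H4_private EH4).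
  have uv : u != v.
    apply: contraTneq (forallP H3 E) => uv; rewrite (subsetP H4_sub _ EH4) defE uv /=.
    by rewrite setUid cards2; case: (v != w).
  exists u, v; split => //; rewrite /pair defE; have := traces_triple sv sw.
  by case: (u \in V1) => -[-> ->]; rewrite ?cards1 ?cards2 ?uv.
rewrite -(card_in_imset (f := pair)) ?subset_leq_card //.
  apply/subsetP => _ /imsetP [E EH4 ->]; rewrite inE; apply/existsP; exists E.
  by rewrite EH4 pair_trace; have [u [v [-> uv _]]] := pairP E EH4; rewrite cards2 uv.
move=> E E' EH4 E'H4 eqEE'; have [u [v [pairE _ priv]]] := pairP E EH4.
apply/esym/priv; first exact: (subsetP H4_sub).
  by apply: (subsetP (pair_sub E')); rewrite -eqEE' pairE set21.
by apply: (subsetP (pair_sub E')); rewrite -eqEE' pairE set22.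
Qed.

End TraceGraph.

Lemma card_le_ex (T : finType) (G : {set {set T}}) m :
  simple_graph G -> ~~ has_cycle G m -> #|G| <= ex #|T| m.
Proof.
move=> simpleG noCycle.
pose relabel (e : {set T}) : {set 'I_#|T|} := enum_rank @: e.
have relabel_inj : injective relabel by apply: imset_inj; exact: enum_rank_inj.
rewrite -(card_imset _ relabel_inj) /ex.
apply: (leq_bigmax_cond (P := fun G' => simple_graph G' && ~~ has_cycle G' m)
  (F := fun G' => #|G'|)); apply/andP; split.
  apply/forallP => e'; apply/implyP => /imsetP [e eG ->].
  by rewrite card_imset; [exact: (implyP (forallP simpleG e)) | exact: enum_rank_inj].
apply: contra noCycle => /existsP [v /andP [/injectiveP vinj /forallP vedge]].
apply/existsP; exists [ffun i => enum_val (v i)]; apply/andP; split.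
  by apply/injectiveP => i j; rewrite !ffunE => /enum_val_inj /vinj.
apply/forallP => i; rewrite !ffunE.
have /imsetP [e eG ve] := vedge i.
suff -> : [set enum_val (v i); enum_val (v (ordS i))] = e by [].
by apply: relabel_inj; rewrite -ve /relabel imsetU1 imset_set1 !enum_valK.
Qed.

Theorem mainTheorem8 (T : finType) (k : nat) (H : {set {set T}})
    (V1 V2 : {set T}) (H4 : {set {set T}}) :
  2 <= k ->
  uniform 3 H ->
  ~ berge_cycle H (2 * k + 1) ->
  V1 :&: V2 = set0 -> V1 :|: V2 = setT ->
  H4 \subset H ->
  (forall E, E \in H4 ->
     exists u v w : T,
       [/\ E = [set u; v; w],
           (u \in V1) && (v \in V1) && (w \in V2)
             || (u \in V2) && (v \in V2) && (w \in V1),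
           (forall F, F \in H -> u \in F -> v \in F -> F = E) &
           3 <= maxn (codeg H w u) (codeg H w v)]) ->
  let G4 : {set {set T}} :=
    [set e | [exists E in H4,
               ((e == E :&: V1) || (e == E :&: V2)) && (#|e| == 2)]] in
  ~~ has_cycle G4 (2 * k) /\ #|H4| <= ex #|T| (2 * k).
Proof.
move=> k_ge2 H3 noBerge V12 V1U2 H4_sub H4_private G4.
move: (setC_of_partition V12 V1U2) => eV2; subst V2.
have noCycle : ~~ has_cycle G4 (2 * k).
  apply: (trace_graph_no_cycle (V1 := V1) H4_private H4_sub); last by rewrite -addn1.
  by rewrite (@leq_trans (2 * 2)) // leq_mul2l k_ge2.
split=> //; apply: leq_trans (card_le_trace_graph H4_private H4_sub H3) _.
exact: card_le_ex (trace_graph_simple _ _) noCycle.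
Qed.
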